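(* Let $n\ge 2$ and let $A,B$ be positive words (words in the letters $\sigma_1,\dots,\sigma_{n-1},x_1,\dots,x_{n-1}$), and let $i,k\in\{1,\dots,n-1\}$. (1) Suppose $\sigma_i A\doteq \sigma_k B$. If $k=i$ then $A\doteq B$. If $|k-i|=1$ then there is a positive word $Z$ with $A\doteq \sigma_k\sigma_i Z$ and $B\doteq \sigma_i\sigma_k Z$. If $|k-i|\ge 2$ then there is a positive word $Z$ with $A\doteq \sigma_k Z$ and $B\doteq\sigma_i Z$. (2) Suppose $\sigma_i A\doteq x_k B$. If $|k-i|=1$ then there is a positive word $Z$ with $A\doteq \sigma_k x_i Z$ and $B\doteq \sigma_i\sigma_k Z$. If $|k-i|\ne 1$ then there is a positive word $Z$ with $A\doteq x_k Z$ and $B\doteq \sigma_i Z$. (3) Suppose $x_i A\doteq x_k B$. If $k=i$ then $A\doteq B$. If $|k-i|\ge 2$ then there is a positive word $Z$ with $A\doteq x_k Z$ and $B\doteq x_i Z$. The case $|k-i|=1$ is impossible, i.e. $x_iA\doteq x_kB$ never holds when $|k-i|=1$. The same statements hold for multiples on the right, i.e. with all words written in reverse order: e.g. if $A\sigma_i\doteq B\sigma_k$ with $|k-i|=1$ then $A\doteq Z\sigma_i\sigma_k$, $B\doteq Z\sigma_k\sigma_i$; if $A\sigma_i\doteq Bx_k$ with $|k-i|=1$ then $A\doteq Z x_i\sigma_k$, $B\doteq Z\sigma_k\sigma_i$; if $Ax_i\doteq Bx_k$ with $|k-i|=1$ this is impossible; and analogously in the remaining cases.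
   Context: Fix $n\ge 2$. The positive singular braid monoid $SB_n^+$ is the monoid with generators $\sigma_1,\dots,\sigma_{n-1},x_1,\dots,x_{n-1}$ and relations: $\sigma_i\sigma_j=\sigma_j\sigma_i$ and $x_ix_j=x_jx_i$ if $|i-j|>1$; $x_i\sigma_j=\sigma_jx_i$ if $|i-j|\ne 1$; $\sigma_i\sigma_{i+1}\sigma_i=\sigma_{i+1}\sigma_i\sigma_{i+1}$; $\sigma_i\sigma_{i+1}x_i=x_{i+1}\sigma_i\sigma_{i+1}$; $\sigma_{i+1}\sigma_ix_{i+1}=x_i\sigma_{i+1}\sigma_i$ (for all indices for which these make sense). A positive word is a word in the letters $\sigma_i,x_i$ (possibly empty). For positive words $A,B$, $A\doteq B$ (''positively equal'') means $A$ and $B$ represent the same element of $SB_n^+$. *)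

From Stdlib Require Import List Arith Lia.
Import ListNotations.

Inductive letter : Type :=
| sg : nat -> letter
| xx : nat -> letter.

Definition word := list letter.

Definition idx (l : letter) : nat := match l with sg i => i | xx i => i end.

Definition positive_word (n : nat) (w : word) : Prop :=
  Forall (fun l => 1 <= idx l <= n - 1) w.

Definition dist (i j : nat) : nat := (i - j) + (j - i).

(* Defining relations of SB_n^+ (as ordered pairs; the congruence below is symmetric). *)
Inductive sb_rel (n : nat) : word -> word -> Prop :=
| rel_ss i j : 1 <= i <= n - 1 -> 1 <= j <= n - 1 -> dist i j > 1 ->
    sb_rel n [sg i; sg j] [sg j; sg i]
| rel_xx i j : 1 <= i <= n - 1 -> 1 <= j <= n - 1 -> dist i j > 1 ->
    sb_rel n [xx i; xx j] [xx j; xx i]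
| rel_xs i j : 1 <= i <= n - 1 -> 1 <= j <= n - 1 -> dist i j <> 1 ->
    sb_rel n [xx i; sg j] [sg j; xx i]
| rel_braid i : 1 <= i -> i + 1 <= n - 1 ->
    sb_rel n [sg i; sg (i+1); sg i] [sg (i+1); sg i; sg (i+1)]
| rel_mix1 i : 1 <= i -> i + 1 <= n - 1 ->
    sb_rel n [sg i; sg (i+1); xx i] [xx (i+1); sg i; sg (i+1)]
| rel_mix2 i : 1 <= i -> i + 1 <= n - 1 ->
    sb_rel n [sg (i+1); sg i; xx (i+1)] [xx i; sg (i+1); sg i].

Inductive peq (n : nat) : word -> word -> Prop :=
| peq_refl w : peq n w w
| peq_sym u v : peq n u v -> peq n v u
| peq_trans u v w : peq n u v -> peq n v w -> peq n u w
| peq_step u v l r : sb_rel n l r -> peq n (u ++ l ++ v) (u ++ r ++ v).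

From Stdlib Require Import List Arith Lia Bool.
Import ListNotations.

(* The presentation of SB_n^+ is complemented: for every pair of letters a, b
   there is at most one relation of the form a p = b q, and none at all for
   x_i, x_(i+-1). Writing p = a\b, the six statements say that a U = b V
   forces U = (a\b) Z and V = (b\a) Z. This is proved by induction on the
   length of U and on the derivation of the equality: the transitivity step
   a U = c T = b V is exactly Dehornoy's cube condition for a, b, c. The cube
   condition is decided by word reversing, whose run only depends on the
   kinds of the three letters and on the relative positions of their indices,
   so it suffices to check it for indices in 1..5. The statements about right
   multiples follow by reversing all words, which maps relations to relations. *)

Section PositiveEquality.

Variable n : nat.

Lemma peq_rel l r : sb_rel n l r -> peq n l r.
Proof.
  intro H. pose proof (peq_step n [] [] l r H) as E.
  simpl in E. rewrite !app_nil_r in E. exact E.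
Qed.

Lemma peq_app_l w u v : peq n u v -> peq n (w ++ u) (w ++ v).
Proof.
  induction 1 as [| | | u v l r H].
  - apply peq_refl.
  - apply peq_sym; assumption.
  - eapply peq_trans; eassumption.
  - rewrite !app_assoc, <- (app_assoc _ l), <- (app_assoc _ r). now apply peq_step.
Qed.

Lemma peq_cons a u v : peq n u v -> peq n (a :: u) (a :: v).
Proof. exact (peq_app_l [a] u v). Qed.

Lemma peq_app_r w u v : peq n u v -> peq n (u ++ w) (v ++ w).
Proof.
  induction 1 as [| | | u v l r H].
  - apply peq_refl.
  - apply peq_sym; assumption.
  - eapply peq_trans; eassumption.
  - rewrite <- !app_assoc. now apply peq_step.
Qed.

Lemma peq_length u v : peq n u v -> length u = length v.
Proof.
  induction 1 as [| | | u v l r H]; try congruence.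
  rewrite !length_app. destruct H; reflexivity.
Qed.

Lemma positive_word_peq u v : peq n u v -> (positive_word n u <-> positive_word n v).
Proof.
  unfold positive_word.
  induction 1 as [| | | u v l r H]; try tauto.
  rewrite !Forall_app.
  assert (Forall (fun a => 1 <= idx a <= n - 1) l /\ Forall (fun a => 1 <= idx a <= n - 1) r)
    by (destruct H; split; repeat constructor; simpl; lia).
  tauto.
Qed.

Lemma peq_rev u v : peq n u v -> peq n (rev u) (rev v).
Proof.
  induction 1 as [| | | u v l r H].
  - apply peq_refl.
  - apply peq_sym; assumption.
  - eapply peq_trans; eassumption.
  - rewrite !rev_app_distr, <- !app_assoc. apply peq_app_l, peq_app_r.
    destruct H; simpl.
    + apply peq_rel; constructor; unfold dist in *; lia.
    + apply peq_rel; constructor; unfold dist in *; lia.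
    + apply peq_sym, peq_rel; constructor; assumption.
    + apply peq_rel; constructor; assumption.
    + apply peq_sym, peq_rel; constructor; assumption.
    + apply peq_sym, peq_rel; constructor; assumption.
Qed.

End PositiveEquality.

(** * Complements *)

Inductive position := Same | Lower | Upper | Apart.

Definition position_of (i j : nat) : position :=
  if i =? j then Same else if S i =? j then Lower else if S j =? i then Upper else Apart.

Lemma position_cases i j :
  (i = j /\ position_of i j = Same) \/ (S i = j /\ position_of i j = Lower) \/
  (S j = i /\ position_of i j = Upper) \/
  (i <> j /\ S i <> j /\ S j <> i /\ position_of i j = Apart).
Proof.
  unfold position_of.
  destruct (Nat.eqb_spec i j); [now left|].
  destruct (Nat.eqb_spec (S i) j); [now right; left|].
  destruct (Nat.eqb_spec (S j) i); [now right; right; left|].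
  now right; right; right.
Qed.

Ltac case_position i j :=
  let E := fresh "E" in
  destruct (position_cases i j) as [[? E]|[[? E]|[[? E]|[? [? [? E]]]]]]; rewrite E in *.

Definition position_flip (p : position) : position :=
  match p with Lower => Upper | Upper => Lower | p => p end.

Lemma position_of_sym i j : position_of j i = position_flip (position_of i j).
Proof. case_position i j; case_position j i; first [lia | reflexivity]. Qed.

Lemma position_of_refl i : position_of i i = Same.
Proof. case_position i i; first [lia | reflexivity]. Qed.

Lemma position_of_Same i j : position_of i j = Same -> i = j.
Proof. case_position i j; congruence. Qed.

(* [complement a b] is the word [a\b] such that [a (a\b) = b (b\a)] is a defining
   relation (the trivial one when [a = b]); [None] for [x_i], [x_(i+-1)], which have
   no common right multiple. *)
Definition complement (a b : letter) : option word :=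
  match a, b with
  | sg i, sg j =>
      match position_of i j with
      | Same => Some [] | Apart => Some [sg j] | _ => Some [sg j; sg i]
      end
  | xx i, xx j =>
      match position_of i j with Same => Some [] | Apart => Some [xx j] | _ => None end
  | sg i, xx j =>
      match position_of i j with Lower | Upper => Some [sg j; xx i] | _ => Some [xx j] end
  | xx i, sg j =>
      match position_of i j with Lower | Upper => Some [sg j; sg i] | _ => Some [sg j] end
  end.

Lemma complement_self a : complement a a = Some [].
Proof. destruct a; simpl; now rewrite position_of_refl. Qed.

Definition idx_in (P : nat -> Prop) (l : letter) : Prop := P (idx l).

Lemma complement_idx_in P a b w :
  idx_in P a -> idx_in P b -> complement a b = Some w -> Forall (idx_in P) w.
Proof.
  unfold idx_in; destruct a as [i|i], b as [j|j]; simpl; intros Ha Hb H;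
  destruct (position_of i j); inversion H; repeat constructor; assumption.
Qed.

Definition in_range (n : nat) : letter -> Prop := idx_in (fun x => 1 <= x <= n - 1).

Lemma complement_positive n a b w :
  in_range n a -> in_range n b -> complement a b = Some w -> positive_word n w.
Proof. apply complement_idx_in. Qed.

Lemma complement_sound n a b p q :
  in_range n a -> in_range n b -> complement a b = Some p -> complement b a = Some q ->
  peq n (a :: p) (b :: q).
Proof.
  unfold in_range, idx_in; destruct a as [i|i], b as [j|j]; simpl; intros Ha Hb Hp Hq;
  case_position i j; case_position j i; try lia; inversion Hp; inversion Hq; subst;
  try apply peq_refl.
  all: first
    [ apply peq_rel; constructor; unfold dist; lia
    | apply peq_sym, peq_rel; constructor; unfold dist; lia
    | apply peq_rel; replace (S i) with (i + 1) by lia; constructor; lia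
    | apply peq_sym, peq_rel; replace (S j) with (j + 1) by lia; constructor; lia
    | apply peq_rel; replace (S j) with (j + 1) by lia; constructor; lia
    | apply peq_sym, peq_rel; replace (S i) with (i + 1) by lia; constructor; lia ].
Qed.

Lemma complement_of_sb_rel n a b l r :
  sb_rel n (a :: l) (b :: r) -> complement a b = Some l /\ complement b a = Some r.
Proof.
  inversion 1; subst; simpl; unfold dist in *;
  repeat match goal with |- context [position_of ?i ?j] => case_position i j end;
  try lia; auto.
Qed.

(** * Word reversing *)

Inductive reversal := OutOfFuel | Stuck | Reversed (p q : word).

(* Right reversing: [reverse F u v = Reversed p q] yields [u p = v q]; [Stuck] means
   that some pair of letters met on the way has no common multiple. *)
Fixpoint reverse (fuel : nat) (u v : word) : reversal :=
  match fuel with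
  | 0 => OutOfFuel
  | S fuel =>
    match u, v with
    | [], _ => Reversed v []
    | _, [] => Reversed [] u
    | a :: u, b :: v =>
      match complement a b, complement b a with
      | Some p0, Some q0 =>
        match reverse fuel u p0 with
        | Reversed p1 q1 =>
          match reverse fuel v (q0 ++ q1) with
          | Reversed s t => Reversed (p1 ++ t) s
          | e => e
          end
        | e => e
        end
      | _, _ => Stuck
      end
    end
  end.

Lemma reverse_idx_in P F u v p q :
  Forall (idx_in P) u -> Forall (idx_in P) v -> reverse F u v = Reversed p q ->
  Forall (idx_in P) p /\ Forall (idx_in P) q.
Proof.
  revert u v p q; induction F as [|F IH]; intros u v p q Hu Hv H; simpl in H; [discriminate|].
  destruct u as [|a u]; [inversion H; subst; auto|].
  destruct v as [|b v]; [inversion H; subst; auto|].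
  inversion Hu as [|? ? Ha Hu']; inversion Hv as [|? ? Hb Hv']; subst.
  destruct (complement a b) as [p0|] eqn:E0; [|discriminate].
  destruct (complement b a) as [q0|] eqn:E1; [|discriminate].
  apply (complement_idx_in P a b) in E0; apply (complement_idx_in P b a) in E1; auto.
  destruct (reverse F u p0) as [| |p1 q1] eqn:E2; try discriminate.
  destruct (IH _ _ _ _ Hu' E0 E2) as [Hp1 Hq1].
  destruct (reverse F v (q0 ++ q1)) as [| |s t] eqn:E3; try discriminate.
  inversion H; subst.
  destruct (IH _ _ _ _ Hv' (proj2 (Forall_app _ _ _) (conj E1 Hq1)) E3).
  split; [apply Forall_app|]; auto.
Qed.

Lemma reverse_positive n F u v p q :
  positive_word n u -> positive_word n v -> reverse F u v = Reversed p q ->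
  positive_word n p /\ positive_word n q.
Proof. exact (reverse_idx_in (fun x => 1 <= x <= n - 1) F u v p q). Qed.

Lemma reverse_sound n F u v p q :
  positive_word n u -> positive_word n v -> reverse F u v = Reversed p q ->
  peq n (u ++ p) (v ++ q).
Proof.
  revert u v p q; induction F as [|F IH]; intros u v p q Hu Hv H; simpl in H; [discriminate|].
  destruct u as [|a u]; [inversion H; subst; rewrite app_nil_r; apply peq_refl|].
  destruct v as [|b v]; [inversion H; subst; rewrite app_nil_r; apply peq_refl|].
  inversion Hu as [|? ? Ha Hu']; inversion Hv as [|? ? Hb Hv']; subst.
  destruct (complement a b) as [p0|] eqn:E0; [|discriminate].
  destruct (complement b a) as [q0|] eqn:E1; [|discriminate].
  pose proof (complement_sound n a b p0 q0 Ha Hb E0 E1) as Hab.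
  apply (complement_positive n a b) in E0; apply (complement_positive n b a) in E1; auto.
  destruct (reverse F u p0) as [| |p1 q1] eqn:E2; try discriminate.
  destruct (reverse_positive _ _ _ _ _ _ Hu' E0 E2) as [_ Hq1].
  destruct (reverse F v (q0 ++ q1)) as [| |s t] eqn:E3; try discriminate.
  inversion H; subst.
  apply IH in E2; auto.
  apply IH in E3; [|auto|apply Forall_app; auto].
  simpl. apply (peq_trans _ _ (a :: p0 ++ q1 ++ t)).
  { apply peq_cons. rewrite !app_assoc. now apply peq_app_r. }
  apply (peq_trans _ _ (b :: q0 ++ q1 ++ t)).
  { change (peq n ((a :: p0) ++ q1 ++ t) ((b :: q0) ++ q1 ++ t)). now apply peq_app_r. }
  apply peq_cons. rewrite app_assoc. now apply peq_sym.
Qed.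

(** * The cube condition *)

(* Checks, by reversing, that [u = ab w] and [v = ba w] for a common [w]. *)
Definition corner_check (F : nat) (ab ba u v : word) : bool :=
  match reverse F ab u, reverse F ba v with
  | Reversed w1 [], Reversed w2 [] =>
      match reverse F w1 w2 with Reversed [] [] => true | _ => false end
  | _, _ => false
  end.

(* Dehornoy's cube condition on [a], [b], [c]: after reversing the complements of [c]
   to a common multiple [ca p = cb q], the words [ac p] and [bc q] must be [ab w] and
   [ba w]. Accepting [Stuck] is harmless: then [c T = a U = b V] is impossible. *)
Definition cube_check (F : nat) (a b c : letter) : bool :=
  match complement a c, complement c a, complement c b, complement b c with
  | Some ac, Some ca, Some cb, Some bc =>
      match reverse F ca cb with
      | Reversed p q =>
          match complement a b, complement b a with
          | Some ab, Some ba => corner_check F ab ba (ac ++ p) (bc ++ q)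
          | _, _ => false
          end
      | Stuck => true
      | OutOfFuel => false
      end
  | _, _, _, _ => true
  end.

Lemma corner_check_sound n F ab ba u v :
  positive_word n ab -> positive_word n ba -> positive_word n u -> positive_word n v ->
  corner_check F ab ba u v = true -> exists w, peq n u (ab ++ w) /\ peq n v (ba ++ w).
Proof.
  intros Hab Hba Hu Hv H. unfold corner_check in H.
  destruct (reverse F ab u) as [| |w1 []] eqn:E1; try discriminate.
  destruct (reverse F ba v) as [| |w2 []] eqn:E2; try discriminate.
  destruct (reverse F w1 w2) as [| |[] []] eqn:E3; try discriminate.
  destruct (reverse_positive _ _ _ _ _ _ Hab Hu E1) as [Hw1 _].
  destruct (reverse_positive _ _ _ _ _ _ Hba Hv E2) as [Hw2 _].
  apply (reverse_sound n) in E1, E2, E3; auto.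
  rewrite app_nil_r in E1, E2. rewrite !app_nil_r in E3.
  exists w1. split; [now apply peq_sym|].
  apply (peq_trans _ _ (ba ++ w2)); [now apply peq_sym|].
  apply peq_app_l, peq_sym, E3.
Qed.

Lemma cube_check_sound n F a b c ac ca cb bc :
  in_range n a -> in_range n b -> in_range n c -> cube_check F a b c = true ->
  complement a c = Some ac -> complement c a = Some ca ->
  complement c b = Some cb -> complement b c = Some bc ->
  reverse F ca cb = Stuck \/
  exists p q ab ba w, reverse F ca cb = Reversed p q /\
    complement a b = Some ab /\ complement b a = Some ba /\
    peq n (ac ++ p) (ab ++ w) /\ peq n (bc ++ q) (ba ++ w).
Proof.
  intros Ha Hb Hc H Eac Eca Ecb Ebc. unfold cube_check in H.
  rewrite Eac, Eca, Ecb, Ebc in H.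
  destruct (reverse F ca cb) as [| |p q] eqn:E; try discriminate; [now left|right].
  destruct (complement a b) as [ab|] eqn:Eab; try discriminate.
  destruct (complement b a) as [ba|] eqn:Eba; try discriminate.
  apply (complement_positive n) in Eac, Eca, Ecb, Ebc, Eab, Eba; auto.
  destruct (reverse_positive _ _ _ _ _ _ Eca Ecb E) as [Hp Hq].
  apply (corner_check_sound n) in H as [w Hw]; try (apply Forall_app; split); auto.
  now exists p, q, ab, ba, w.
Qed.

Definition rename (psi : nat -> nat) (l : letter) : letter :=
  match l with sg i => sg (psi i) | xx i => xx (psi i) end.

Definition rename_reversal (psi : nat -> nat) (R : reversal) : reversal :=
  match R with Reversed p q => Reversed (map (rename psi) p) (map (rename psi) q) | e => e end.

Section Renaming.

Variables (P : nat -> Prop) (psi : nat -> nat).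
Hypothesis psi_position : forall x y, P x -> P y -> position_of (psi x) (psi y) = position_of x y.

Lemma complement_rename a b : idx_in P a -> idx_in P b ->
  complement (rename psi a) (rename psi b) = option_map (map (rename psi)) (complement a b).
Proof.
  unfold idx_in; destruct a as [i|i], b as [j|j]; simpl; intros Ha Hb;
  rewrite psi_position by assumption; destruct (position_of i j); reflexivity.
Qed.

Lemma reverse_rename F u v : Forall (idx_in P) u -> Forall (idx_in P) v ->
  reverse F (map (rename psi) u) (map (rename psi) v) = rename_reversal psi (reverse F u v).
Proof.
  revert u v; induction F as [|F IH]; intros u v Hu Hv; [reflexivity|].
  destruct u as [|a u]; [reflexivity|]. destruct v as [|b v]; [reflexivity|].
  inversion Hu as [|? ? Ha Hu']; inversion Hv as [|? ? Hb Hv']; subst.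
  cbn [map reverse]. rewrite !complement_rename by assumption.
  destruct (complement a b) as [p0|] eqn:E0; [|reflexivity].
  destruct (complement b a) as [q0|] eqn:E1; [|reflexivity].
  apply (complement_idx_in P a b) in E0; apply (complement_idx_in P b a) in E1; auto.
  cbn [option_map]. rewrite IH by assumption.
  destruct (reverse F u p0) as [| |p1 q1] eqn:E2; try reflexivity.
  destruct (reverse_idx_in P F u p0 p1 q1 Hu' E0 E2) as [_ Hq1].
  cbn [rename_reversal]. rewrite <- map_app, IH by (try apply Forall_app; auto).
  destruct (reverse F v (q0 ++ q1)); try reflexivity.
  cbn [rename_reversal]. now rewrite map_app.
Qed.

Lemma corner_check_rename F ab ba u v :
  Forall (idx_in P) ab -> Forall (idx_in P) ba -> Forall (idx_in P) u -> Forall (idx_in P) v ->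
  corner_check F (map (rename psi) ab) (map (rename psi) ba) (map (rename psi) u)
    (map (rename psi) v) = corner_check F ab ba u v.
Proof.
  intros Hab Hba Hu Hv. unfold corner_check. rewrite !reverse_rename by assumption.
  destruct (reverse F ab u) as [| |w1 []] eqn:E1; try reflexivity;
  destruct (reverse F ba v) as [| |w2 []] eqn:E2; try reflexivity.
  destruct (reverse_idx_in P _ _ _ _ _ Hab Hu E1) as [Hw1 _].
  destruct (reverse_idx_in P _ _ _ _ _ Hba Hv E2) as [Hw2 _].
  cbn [rename_reversal map]. rewrite reverse_rename by assumption.
  destruct (reverse F w1 w2) as [| |[] []]; reflexivity.
Qed.

Lemma cube_check_rename F a b c : idx_in P a -> idx_in P b -> idx_in P c ->
  cube_check F (rename psi a) (rename psi b) (rename psi c) = cube_check F a b c.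
Proof.
  intros Ha Hb Hc. unfold cube_check. rewrite !complement_rename by assumption.
  destruct (complement a c) as [ac|] eqn:Eac; [|reflexivity].
  destruct (complement c a) as [ca|] eqn:Eca; [|reflexivity].
  destruct (complement c b) as [cb|] eqn:Ecb; [|reflexivity].
  destruct (complement b c) as [bc|] eqn:Ebc; [|reflexivity].
  apply (complement_idx_in P) in Eac, Eca, Ecb, Ebc; auto.
  cbn [option_map]. rewrite reverse_rename by assumption.
  destruct (reverse F ca cb) as [| |p q] eqn:E; try reflexivity.
  destruct (reverse_idx_in P _ _ _ _ _ Eca Ecb E) as [Hp Hq].
  cbn [rename_reversal].
  destruct (complement a b) as [ab|] eqn:Eab; [|reflexivity].
  destruct (complement b a) as [ba|] eqn:Eba; [|reflexivity].
  apply (complement_idx_in P) in Eab, Eba; auto.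
  cbn [option_map]. rewrite <- !map_app.
  apply corner_check_rename; try apply Forall_app; auto.
Qed.

End Renaming.

Definition small_indices := [1; 2; 3; 4; 5].

Definition position_eqb (p q : position) : bool :=
  match p, q with
  | Same, Same | Lower, Lower | Upper, Upper | Apart, Apart => true
  | _, _ => false
  end.

Definition occurs_small (pxy pxz pyz : position) : bool :=
  existsb (fun '(x, y, z) => position_eqb (position_of x y) pxy &&
                             position_eqb (position_of x z) pxz &&
                             position_eqb (position_of y z) pyz)
    (list_prod (list_prod small_indices small_indices) small_indices).

Lemma occurs_small_spec pxy pxz pyz : occurs_small pxy pxz pyz = true ->
  exists x y z, In x small_indices /\ In y small_indices /\ In z small_indices /\
    position_of x y = pxy /\ position_of x z = pxz /\ position_of y z = pyz.
Proof.
  intro H. apply existsb_exists in H as [[[x y] z] [Hin H]].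
  apply in_prod_iff in Hin as [Hin Hz]. apply in_prod_iff in Hin as [Hx Hy].
  rewrite !andb_true_iff in H.
  destruct H as [[Hxy Hxz] Hyz].
  exists x, y, z. repeat split; try assumption.
  all: match goal with H : position_eqb ?p ?q = true |- ?p = ?q => destruct p, q; easy end.
Qed.

Lemma small_configuration i j k : exists x y z,
  In x small_indices /\ In y small_indices /\ In z small_indices /\
  position_of x y = position_of i j /\ position_of x z = position_of i k /\
  position_of y z = position_of j k.
Proof.
  apply occurs_small_spec.
  case_position i j; case_position i k; case_position j k; try lia; vm_compute; reflexivity.
Qed.

(* Enough for every reversal performed by [cube_check] on letters of index at most 5. *)
Definition cube_fuel := 6.

Definition small_letters : list letter := flat_map (fun i => [sg i; xx i]) small_indices.

Lemma cube_check_small_letters a b c :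
  In a small_letters -> In b small_letters -> In c small_letters ->
  cube_check cube_fuel a b c = true.
Proof.
  assert (H : forallb (fun a => forallb (fun b =>
                 forallb (cube_check cube_fuel a b) small_letters) small_letters)
                 small_letters = true)
    by (vm_compute; reflexivity).
  intros Ha Hb Hc. rewrite forallb_forall in H. specialize (H a Ha).
  rewrite forallb_forall in H. specialize (H b Hb).
  rewrite forallb_forall in H. exact (H c Hc).
Qed.

Definition with_index (l : letter) (x : nat) : letter :=
  match l with sg _ => sg x | xx _ => xx x end.

Lemma with_index_small l x : In x small_indices -> In (with_index l x) small_letters.
Proof. intro Hx. apply in_flat_map. exists x. destruct l; simpl; auto. Qed.

Lemma relabel_triple i j k x y z :
  position_of x y = position_of i j -> position_of x z = position_of i k ->
  position_of y z = position_of j k ->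
  exists psi, psi x = i /\ psi y = j /\ psi z = k /\
    forall u v, (u = x \/ u = y \/ u = z) -> (v = x \/ v = y \/ v = z) ->
      position_of (psi u) (psi v) = position_of u v.
Proof.
  intros Hxy Hxz Hyz.
  exists (fun w => if w =? x then i else if w =? y then j else k).
  assert (Ex : (if x =? x then i else if x =? y then j else k) = i)
    by now rewrite Nat.eqb_refl.
  assert (Ey : (if y =? x then i else if y =? y then j else k) = j).
  { rewrite Nat.eqb_refl. destruct (Nat.eqb_spec y x) as [->|]; [|reflexivity].
    rewrite position_of_refl in Hxy. now apply position_of_Same. }
  assert (Ez : (if z =? x then i else if z =? y then j else k) = k).
  { destruct (Nat.eqb_spec z x) as [->|].
    { rewrite position_of_refl in Hxz. now apply position_of_Same. }
    destruct (Nat.eqb_spec z y) as [->|]; [|reflexivity].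
    rewrite position_of_refl in Hyz. now apply position_of_Same. }
  assert (Hsym : forall p q u v, position_of u v = position_of p q ->
                 position_of v u = position_of q p)
    by (intros p q u v H; now rewrite position_of_sym, H, <- position_of_sym).
  repeat split; try assumption.
  intros u v Hu Hv.
  destruct Hu as [-> | [-> | ->]]; destruct Hv as [-> | [-> | ->]];
  rewrite ?Ex, ?Ey, ?Ez, ?position_of_refl; auto.
Qed.

Lemma cube_check_true a b c : cube_check cube_fuel a b c = true.
Proof.
  destruct (small_configuration (idx a) (idx b) (idx c))
    as (x & y & z & Hx & Hy & Hz & Hxy & Hxz & Hyz).
  destruct (relabel_triple _ _ _ _ _ _ Hxy Hxz Hyz) as (psi & Ex & Ey & Ez & Hpsi).
  assert (Ea : rename psi (with_index a x) = a) by (destruct a; simpl in *; congruence).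
  assert (Eb : rename psi (with_index b y) = b) by (destruct b; simpl in *; congruence).
  assert (Ec : rename psi (with_index c z) = c) by (destruct c; simpl in *; congruence).
  rewrite <- Ea, <- Eb, <- Ec, (cube_check_rename _ psi Hpsi cube_fuel)
    by (unfold idx_in; destruct a, b, c; simpl; auto).
  apply cube_check_small_letters; now apply with_index_small.
Qed.

(** * Left cancellation and complements *)

Definition complemented n a b U V : Prop :=
  exists p q Z, complement a b = Some p /\ complement b a = Some q /\
    peq n U (p ++ Z) /\ peq n V (q ++ Z).

Definition complemented_below n r : Prop :=
  forall a b U V, length U < r -> positive_word n (a :: U) -> peq n (a :: U) (b :: V) ->
    complemented n a b U V.

Definition reversal_spec n (R : reversal) (X Y : word) : Prop :=
  match R with
  | Reversed p q => exists Z, peq n X (p ++ Z) /\ peq n Y (q ++ Z)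
  | Stuck => False
  | OutOfFuel => True
  end.

Section Induction.

Variables n r : nat.
Hypothesis IH : complemented_below n r.

Lemma reverse_complete F u v X Y :
  length (u ++ X) <= r -> positive_word n (u ++ X) -> peq n (u ++ X) (v ++ Y) ->
  reversal_spec n (reverse F u v) X Y.
Proof.
  revert u v X Y; induction F as [|F IHF]; intros u v X Y Hl Hp H; simpl; [exact I|].
  destruct u as [|a u]; [now exists Y; split; [|apply peq_refl]|].
  destruct v as [|b v]; [now exists X; split; [apply peq_refl|apply peq_sym]|].
  simpl in *.
  destruct (IH a b (u ++ X) (v ++ Y) ltac:(lia) Hp H) as (p0 & q0 & Z & E0 & E1 & H0 & H1).
  rewrite E0, E1. inversion Hp as [|? ? _ HuX]; subst.
  pose proof (IHF u p0 X Z ltac:(lia) HuX H0) as R1.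
  destruct (reverse F u p0) as [| |p1 q1]; simpl in R1 |- *; try tauto.
  destruct R1 as (Z1 & HX & HZ).
  pose proof (peq_length _ _ _ H) as Hlen. simpl in Hlen.
  apply (positive_word_peq _ _ _ H) in Hp. inversion Hp as [|? ? _ HvY]; subst.
  assert (H2 : peq n (v ++ Y) ((q0 ++ q1) ++ Z1)).
  { apply (peq_trans _ _ _ _ H1). rewrite <- app_assoc. now apply peq_app_l. }
  pose proof (IHF v (q0 ++ q1) Y Z1 ltac:(lia) HvY H2) as R2.
  destruct (reverse F v (q0 ++ q1)) as [| |s t]; simpl in R2 |- *; try tauto.
  destruct R2 as (Z2 & HY & HZ1).
  exists Z2. split; [|exact HY].
  apply (peq_trans _ _ _ _ HX). rewrite <- app_assoc. now apply peq_app_l.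
Qed.

Variable fuel : nat.
Hypothesis cube : forall a b c, cube_check fuel a b c = true.

Lemma complemented_trans a b c U T V :
  length T = r -> positive_word n (a :: U) -> positive_word n (c :: T) ->
  positive_word n (b :: V) ->
  complemented n a c U T -> complemented n c b T V -> complemented n a b U V.
Proof.
  intros HlT HU HT HV (ac & ca & Z1 & Eac & Eca & HU1 & HT1)
    (cb & bc & Z2 & Ecb & Ebc & HT2 & HV2).
  apply Forall_cons_iff in HU as [Ha _], HT as [Hc HT], HV as [Hb _].
  assert (Hca : peq n (ca ++ Z1) (cb ++ Z2))
    by (eapply peq_trans; [apply peq_sym|]; eassumption).
  pose proof (peq_length _ _ _ HT1) as Hl.
  apply (positive_word_peq _ _ _ HT1) in HT.
  assert (R : reversal_spec n (reverse fuel ca cb) Z1 Z2)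
    by (apply reverse_complete; auto; rewrite <- Hl; lia).
  destruct (cube_check_sound n fuel a b c ac ca cb bc Ha Hb Hc (cube a b c) Eac Eca Ecb Ebc)
    as [E | (p & q & ab & ba & w & E & Eab & Eba & Hp & Hq)];
    rewrite E in R; simpl in R; [contradiction|].
  destruct R as (Z & HZ1 & HZ2).
  exists ab, ba, (w ++ Z). split; [assumption|]. split; [assumption|]. split.
  - apply (peq_trans _ _ _ _ HU1). apply (peq_trans _ _ ((ac ++ p) ++ Z)).
    + rewrite <- app_assoc. now apply peq_app_l.
    + rewrite app_assoc. now apply peq_app_r.
  - apply (peq_trans _ _ _ _ HV2). apply (peq_trans _ _ ((bc ++ q) ++ Z)).
    + rewrite <- app_assoc. now apply peq_app_l.
    + rewrite app_assoc. now apply peq_app_r.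
Qed.

Lemma complemented_of_peq W1 W2 : peq n W1 W2 ->
  forall a U b V, W1 = a :: U -> W2 = b :: V -> length U = r -> positive_word n W1 ->
  complemented n a b U V.
Proof.
  induction 1 as [w | u v H IHH | u v w H1 IH1 H2 IH2 | u v l l' Hrel];
    intros a U b V E1 E2; subst; intros HL HP.
  - injection E2 as <- <-. exists [], [], U. rewrite complement_self.
    repeat split; apply peq_refl.
  - pose proof (peq_length _ _ _ H) as L. simpl in L.
    destruct (IHH b V a U eq_refl eq_refl ltac:(lia) (proj2 (positive_word_peq _ _ _ H) HP))
      as (p & q & Z & Ep & Eq & HV & HU).
    now exists q, p, Z.
  - pose proof (peq_length _ _ _ H1) as L.
    destruct v as [|c T]; [discriminate L|].
    assert (HT : length T = r) by (simpl in L; lia).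
    pose proof (proj1 (positive_word_peq _ _ _ H1) HP) as HPv.
    pose proof (proj1 (positive_word_peq _ _ _ H2) HPv) as HPw.
    apply (complemented_trans a b c U T V); auto.
  - destruct u as [|x u].
    + destruct l as [|a' l]; [inversion Hrel|]. destruct l' as [|b' l']; [inversion Hrel|].
      injection E1 as <- <-. injection E2 as <- <-.
      destruct (complement_of_sb_rel _ _ _ _ _ Hrel) as [Ea Eb].
      exists l, l', v. repeat split; apply peq_refl || assumption.
    + injection E1 as <- <-. injection E2 as <- <-.
      exists [], [], (u ++ l' ++ v). rewrite complement_self. simpl. repeat split.
      * now apply peq_step.
      * apply peq_refl.
Qed.

End Induction.

Lemma complemented_below_all n r : complemented_below n r.
Proof.
  induction r as [|r IHr]; intros a b U V HL HP H; [lia|].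
  destruct (Nat.eq_dec (length U) r) as [<-|].
  - exact (complemented_of_peq n _ IHr cube_fuel cube_check_true _ _ H a U b V
             eq_refl eq_refl eq_refl HP).
  - apply IHr; auto; lia.
Qed.

Lemma left_complement n a b A B :
  in_range n a -> positive_word n A -> peq n (a :: A) (b :: B) ->
  exists p q Z, complement a b = Some p /\ complement b a = Some q /\ positive_word n Z /\
    peq n A (p ++ Z) /\ peq n B (q ++ Z).
Proof.
  intros Ha HA H.
  destruct (complemented_below_all n (S (length A)) a b A B (Nat.lt_succ_diag_r _)
              (Forall_cons _ Ha HA) H) as (p & q & Z & Ep & Eq & HpZ & HqZ).
  exists p, q, Z. split; [assumption|]. split; [assumption|]. split; [|now split].
  now apply (positive_word_peq _ _ _ HpZ), Forall_app in HA.
Qed.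

Lemma right_complement n a b A B :
  in_range n a -> positive_word n A -> peq n (A ++ [a]) (B ++ [b]) ->
  exists p q Z, complement a b = Some p /\ complement b a = Some q /\ positive_word n Z /\
    peq n A (Z ++ rev p) /\ peq n B (Z ++ rev q).
Proof.
  intros Ha HA H. apply peq_rev in H. rewrite !rev_app_distr in H.
  apply Forall_rev in HA.
  destruct (left_complement n a b (rev A) (rev B) Ha HA H)
    as (p & q & Z & Ep & Eq & HZ & HpZ & HqZ).
  apply peq_rev in HpZ, HqZ. rewrite rev_involutive, rev_app_distr in HpZ, HqZ.
  exists p, q, (rev Z). split; [assumption|]. split; [assumption|].
  split; [now apply Forall_rev|]. now split.
Qed.

Theorem proposition2p1 (n : nat) (A B : word) (i k : nat) :
  2 <= n -> positive_word n A -> positive_word n B ->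
  1 <= i <= n - 1 -> 1 <= k <= n - 1 ->
  (* left multiples *)
  (* (1) *)
  (peq n (sg i :: A) (sg k :: B) ->
     (k = i -> peq n A B) /\
     (dist k i = 1 -> exists Z, positive_word n Z /\
        peq n A (sg k :: sg i :: Z) /\ peq n B (sg i :: sg k :: Z)) /\
     (dist k i >= 2 -> exists Z, positive_word n Z /\
        peq n A (sg k :: Z) /\ peq n B (sg i :: Z))) /\
  (* (2) *)
  (peq n (sg i :: A) (xx k :: B) ->
     (dist k i = 1 -> exists Z, positive_word n Z /\
        peq n A (sg k :: xx i :: Z) /\ peq n B (sg i :: sg k :: Z)) /\
     (dist k i <> 1 -> exists Z, positive_word n Z /\
        peq n A (xx k :: Z) /\ peq n B (sg i :: Z))) /\
  (* (3) *)
  (peq n (xx i :: A) (xx k :: B) ->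
     (k = i -> peq n A B) /\
     (dist k i >= 2 -> exists Z, positive_word n Z /\
        peq n A (xx k :: Z) /\ peq n B (xx i :: Z)) /\
     dist k i <> 1) /\
  (* right multiples (mirror statements) *)
  (* (1') *)
  (peq n (A ++ [sg i]) (B ++ [sg k]) ->
     (k = i -> peq n A B) /\
     (dist k i = 1 -> exists Z, positive_word n Z /\
        peq n A (Z ++ [sg i; sg k]) /\ peq n B (Z ++ [sg k; sg i])) /\
     (dist k i >= 2 -> exists Z, positive_word n Z /\
        peq n A (Z ++ [sg k]) /\ peq n B (Z ++ [sg i]))) /\
  (* (2') *)
  (peq n (A ++ [sg i]) (B ++ [xx k]) ->
     (dist k i = 1 -> exists Z, positive_word n Z /\
        peq n A (Z ++ [xx i; sg k]) /\ peq n B (Z ++ [sg k; sg i])) /\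
     (dist k i <> 1 -> exists Z, positive_word n Z /\
        peq n A (Z ++ [xx k]) /\ peq n B (Z ++ [sg i]))) /\
  (* (3') *)
  (peq n (A ++ [xx i]) (B ++ [xx k]) ->
     (k = i -> peq n A B) /\
     (dist k i >= 2 -> exists Z, positive_word n Z /\
        peq n A (Z ++ [xx k]) /\ peq n B (Z ++ [xx i])) /\
     dist k i <> 1).
Proof.
  intros _ HA _ Hi _.
  repeat split;
  match goal with
  | H : peq _ (?a :: _) _ |- _ => destruct (left_complement n a _ _ _ Hi HA H)
      as (p & q & Z & Ep & Eq & HZ & HAZ & HBZ)
  | H : peq _ (_ ++ [?a]) _ |- _ => destruct (right_complement n a _ _ _ Hi HA H)
      as (p & q & Z & Ep & Eq & HZ & HAZ & HBZ)
  end;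
  simpl in Ep, Eq; intros Hd; case_position i k; case_position k i; unfold dist in *; try lia;
  first [ discriminate | injection Ep as <-; injection Eq as <- ];
  rewrite ?app_nil_r in *;
  first [ solve [eauto] | exact (peq_trans _ _ _ _ HAZ (peq_sym _ _ _ HBZ)) ].
Qed.
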